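(* Let $(X,d,\preccurlyeq)$ be a preordered $s$-regular $b$-metric space and let $T,S,\tilde T,\tilde S:X\to X$. Suppose there are mappings $H_t,K_t:X\to X$, $0\le t\le n$, such that $$T=H_0\preccurlyeq H_1\succcurlyeq H_2\preccurlyeq\cdots\succcurlyeq H_n=\tilde T,\qquad S=K_0\succcurlyeq K_1\preccurlyeq K_2\succcurlyeq\cdots\preccurlyeq K_n=\tilde S.$$ Suppose the mappings $H_t$, $1\le t\le n$, are isotone, $x_0\in\mathrm{Coin}(T,S)$, and: (i) for each odd $t$, $1\le t\le n$: $K_t$ covers $H_t$ from above, and every chain $C\in\mathcal{C}^*(H_t,K_t,\preccurlyeq)$ has an upper bound $w\in X$ satisfying $w\succcurlyeq H_t(w)$ for which there exists $z\in X$ with $K_t^i(z)\succcurlyeq K_t(w)\succcurlyeq H_t(w)$ for all $i\in\mathbb{N}$ and $d(H_t^i(w),K_t^i(z))\to 0$ as $i\to\infty$; (ii) for each even $t$, $1\le t\le n$: $K_t$ covers $H_t$, and every chain $C\in\mathcal{C}(H_t,K_t,\preccurlyeq)$ has a lower bound $w'\in X$ satisfying $w'\preccurlyeq H_t(w')$ for which there exists $z'\in X$ with $K_t^i(z')\preccurlyeq K_t(w')\preccurlyeq H_t(w')$ for all $i\in\mathbb{N}$ and $d(H_t^i(w'),K_t^i(z'))\to 0$ as $i\to\infty$. Then there exists a fence $x_0\preccurlyeq x_1\succcurlyeq x_2\preccurlyeq\cdots\succcurlyeq x_n$ such that for each odd $t$, $x_t\in\mathrm{Coin}(H_t,K_t)\cap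 O^*_X(x_{t-1})$ and $x_t$ is a maximal element of that set, and for each even $t$, $x_t\in\mathrm{Coin}(H_t,K_t)\cap O_X(x_{t-1})$ and $x_t$ is a minimal element of that set.
   Context: A $b$-metric space with coefficient $s\ge 1$ is a nonempty set $X$ with $d:X\times X\to[0,\infty)$ such that for all $x,y,z$: $d(x,y)=0$ iff $x=y$; $d(x,y)=d(y,x)$; $d(x,y)\le s[d(x,z)+d(z,y)]$. A preorder is a reflexive transitive relation $\preccurlyeq$; $x\succcurlyeq y$ means $y\preccurlyeq x$; $x\prec y$ means $x\preccurlyeq y$ and $x\ne y$. A preordered $s$-regular $b$-metric space $(X,d,\preccurlyeq)$ is a $b$-metric space with coefficient $s$ with a preorder such that $x\preccurlyeq y\preccurlyeq z$ implies $\max\{d(x,y),d(y,z)\}\le s^2d(x,z)$. For maps $F,G$, $F\preccurlyeq G$ means $F(x)\preccurlyeq G(x)$ for all $x$. A chain is a subset any two elements of which are comparable. A map $T$ is isotone if $x\preccurlyeq y$ implies $T(x)\preccurlyeq T(y)$; $T^i$ is the $i$-th iterate. $O_X(x_0)=\{x:x\preccurlyeq x_0\}$, $O^*_X(x_0)=\{x:x\succcurlyeq x_0\}$, $\mathrm{Coin}(T,S)=\{x:T(x)=S(x)\}$. $S$ covers $T$ if for every $x$ with $T(x)\preccurlyeq S(x)$ there is $y\preccurlyeq x$ with $S(y)=T(x)$; $S$ covers $T$ from above if for every $x$ with $T(x)\succcurlyeq S(x)$ there is $y\succcurlyeq x$ with $S(y)=T(x)$. $\mathcal{C}(T,S,\preccurlyeq)$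 is the set of chains $C$ such that for all $x,y\in C$: $T(x)\preccurlyeq S(x)$; $x\prec y$ implies $S(x)\preccurlyeq T(y)$; $S(C)\subset T(X)$. $\mathcal{C}^*(T,S,\preccurlyeq)$ is the set of chains $C$ such that for all $x,y\in C$: $T(x)\succcurlyeq S(x)$; $x\prec y$ implies $T(x)\preccurlyeq S(y)$; $S(C)\subset T(X)$. Upper/lower bounds of $C$ are with respect to $\preccurlyeq$. A minimal (maximal) element of $A$ is $w\in A$ with no $u\in A$ such that $u\prec w$ ($w\prec u$). A fence is a finite sequence with alternating relations as displayed. *)

From Stdlib Require Import Reals.
Open Scope R_scope.

Section Defs.
Variable X : Type.

Definition is_bmetric (s : R) (d : X -> X -> R) : Prop :=
  1 <= s /\
  (forall x y, 0 <= d x y) /\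
  (forall x y, d x y = 0 <-> x = y) /\
  (forall x y, d x y = d y x) /\
  (forall x y z, d x y <= s * (d x z + d z y)).

Definition is_preorder (le : X -> X -> Prop) : Prop :=
  (forall x, le x x) /\ (forall x y z, le x y -> le y z -> le x z).

Definition slt (le : X -> X -> Prop) (x y : X) : Prop := le x y /\ x <> y.

Definition preord_sreg_bmetric (s : R) (d : X -> X -> R) (le : X -> X -> Prop) : Prop :=
  is_bmetric s d /\ is_preorder le /\
  (forall x y z, le x y -> le y z -> Rmax (d x y) (d y z) <= s ^ 2 * d x z).

Definition map_le (le : X -> X -> Prop) (F G : X -> X) : Prop :=
  forall x, le (F x) (G x).

Definition isotone (le : X -> X -> Prop) (T : X -> X) : Prop :=
  forall x y, le x y -> le (T x) (T y).

Definition Coin (T S : X -> X) (x : X) : Prop := T x = S x.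

Definition O_X (le : X -> X -> Prop) (x0 x : X) : Prop := le x x0.
Definition Ostar_X (le : X -> X -> Prop) (x0 x : X) : Prop := le x0 x.

Definition covers (le : X -> X -> Prop) (T S : X -> X) : Prop :=
  forall x, le (T x) (S x) -> exists y, le y x /\ S y = T x.

Definition covers_above (le : X -> X -> Prop) (T S : X -> X) : Prop :=
  forall x, le (S x) (T x) -> exists y, le x y /\ S y = T x.

Definition is_chain (le : X -> X -> Prop) (C : X -> Prop) : Prop :=
  forall x y, C x -> C y -> le x y \/ le y x.

Definition chainsC (le : X -> X -> Prop) (T S : X -> X) (C : X -> Prop) : Prop :=
  is_chain le C /\
  (forall x, C x -> le (T x) (S x)) /\
  (forall x y, C x -> C y -> slt le x y -> le (S x) (T y)) /\
  (forall x, C x -> exists u, T u = S x).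

Definition chainsCstar (le : X -> X -> Prop) (T S : X -> X) (C : X -> Prop) : Prop :=
  is_chain le C /\
  (forall x, C x -> le (S x) (T x)) /\
  (forall x y, C x -> C y -> slt le x y -> le (T x) (S y)) /\
  (forall x, C x -> exists u, T u = S x).

Definition upper_bound (le : X -> X -> Prop) (C : X -> Prop) (w : X) : Prop :=
  forall x, C x -> le x w.
Definition lower_bound (le : X -> X -> Prop) (C : X -> Prop) (w : X) : Prop :=
  forall x, C x -> le w x.

Definition maximal_in (le : X -> X -> Prop) (A : X -> Prop) (w : X) : Prop :=
  A w /\ ~ (exists u, A u /\ slt le w u).
Definition minimal_in (le : X -> X -> Prop) (A : X -> Prop) (w : X) : Prop :=
  A w /\ ~ (exists u, A u /\ slt le u w).

End Defs.

Arguments is_bmetric {X}.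
Arguments is_preorder {X}.
Arguments slt {X}.
Arguments preord_sreg_bmetric {X}.
Arguments map_le {X}.
Arguments isotone {X}.
Arguments Coin {X}.
Arguments O_X {X}.
Arguments Ostar_X {X}.
Arguments covers {X}.
Arguments covers_above {X}.
Arguments is_chain {X}.
Arguments chainsC {X}.
Arguments chainsCstar {X}.
Arguments upper_bound {X}.
Arguments lower_bound {X}.
Arguments maximal_in {X}.
Arguments minimal_in {X}.

(** In an s-regular space the preorder is antisymmetric, and whenever
    [H^i w <= H w <= K w <= K^i z] the distance [d (H w) (K w)] is at most
    [2 s^3 d (H^i w, K^i z)]; so the hypotheses on the upper bound [w] of a chain
    force [w] to be a coincidence point.  Zorn's lemma applied to the chains of
    [C^*(H, K)] through a point [x1] with [K x1 = H x] yields a maximal chain; its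
    upper bound is a coincidence point above [x], and it is maximal because any
    strictly larger coincidence point would extend the chain.  The even steps are
    the same statement for the reversed preorder, and the fence is built one step
    at a time, each new point being a coincidence point of the next pair. *)

From Stdlib Require Import Reals Lra Lia.
From mathcomp Require classical_sets.
Open Scope R_scope.

Lemma le_0_of_dominated_by_null (c k : R) (u : nat -> R) :
  0 < k -> (forall i, (1 <= i)%nat -> c <= k * u i) -> Un_cv u 0 -> c <= 0.
Proof.
  intros hk hdom hcv. apply Rnot_lt_le; intro hc.
  destruct (hcv (c / k)) as [N hN]; [apply Rdiv_lt_0_compat; lra|].
  specialize (hN (S N) ltac:(lia)). specialize (hdom (S N) ltac:(lia)).
  unfold R_dist in hN. rewrite Rminus_0_r in hN.
  apply Rabs_def2 in hN as [hN _].
  apply (Rmult_lt_compat_l k) in hN; [|exact hk].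
  replace (k * (c / k)) with c in hN by (field; lra). lra.
Qed.

Section Regular.
Variables (X : Type) (d : X -> X -> R) (s : R) (le : X -> X -> Prop).
Hypothesis Hsp : preord_sreg_bmetric s d le.

Lemma sreg_le_refl x : le x x.
Proof. destruct Hsp as [_ [[hrefl _] _]]. apply hrefl. Qed.

Lemma sreg_le_trans x y z : le x y -> le y z -> le x z.
Proof. destruct Hsp as [_ [[_ htrans] _]]. apply htrans. Qed.

Lemma sreg_le_antisym x y : le x y -> le y x -> x = y.
Proof.
  intros hxy hyx. destruct Hsp as [[_ [hpos [hzero _]]] [_ hreg]].
  pose proof (hreg x y x hxy hyx) as hxx.
  rewrite (proj2 (hzero x x) eq_refl), Rmult_0_r in hxx.
  apply hzero. pose proof (Rmax_l (d x y) (d y x)). pose proof (hpos x y). lra.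
Qed.

Lemma sreg_dist_inner_le a b c e :
  le a b -> le b c -> le c e -> d b c <= 2 * s ^ 3 * d a e.
Proof.
  intros hab hbc hce. destruct Hsp as [[hs [hpos [_ [hsym htri]]]] [_ hreg]].
  assert (dab : d a b <= s ^ 2 * d a e).
  { eapply Rle_trans; [apply Rmax_l|]. apply hreg; [exact hab|].
    eapply sreg_le_trans; eassumption. }
  assert (dac : d a c <= s ^ 2 * d a e).
  { eapply Rle_trans; [apply Rmax_l|]. apply hreg; [|exact hce].
    eapply sreg_le_trans; eassumption. }
  pose proof (htri b c a) as dbc. rewrite (hsym b a) in dbc.
  pose proof (hpos a b). pose proof (hpos a c). simpl in *. nra.
Qed.

Section Coincidence.
Variables H K : X -> X.
Hypothesis H_iso : isotone le H.

Lemma iter_le_of_image_le w :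
  le (H w) w -> forall i, le (Nat.iter (S i) H w) (H w).
Proof.
  intros hw i. induction i as [|i IH]; [apply sreg_le_refl|].
  apply H_iso. eapply sreg_le_trans; eassumption.
Qed.

Lemma coin_of_approaching_orbits w z :
  le (H w) w ->
  (forall i, (1 <= i)%nat -> le (K w) (Nat.iter i K z) /\ le (H w) (K w)) ->
  Un_cv (fun i => d (Nat.iter i H w) (Nat.iter i K z)) 0 ->
  Coin H K w.
Proof.
  intros hw hz hcv. destruct Hsp as [[hs [hpos [hzero _]]] _].
  apply hzero, Rle_antisym; [|apply hpos].
  apply (le_0_of_dominated_by_null _ (2 * s ^ 3)
           (fun i => d (Nat.iter i H w) (Nat.iter i K z))); [simpl; nra| |exact hcv].
  intros [|i] hi; [lia|]. destruct (hz (S i) hi) as [hKz hHK].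
  apply sreg_dist_inner_le; [apply iter_le_of_image_le| |]; assumption.
Qed.

Lemma chainsCstar_sub (C D : X -> Prop) :
  chainsCstar le H K C -> (forall y, D y -> C y) -> chainsCstar le H K D.
Proof.
  intros [hch [hKH [hslt him]]] hDC.
  split; [|split; [|split]]; intros a; [intros b| |intros b|]; auto.
Qed.

Lemma chainsCstar_single x :
  le (K x) (H x) -> (exists u, H u = K x) -> chainsCstar le H K (fun y => y = x).
Proof.
  intros hx hu. split; [|split; [|split]].
  - intros a b -> ->. left. apply sreg_le_refl.
  - intros a ->. exact hx.
  - intros a b -> -> [_ hne]. contradiction.
  - intros a ->. exact hu.
Qed.

Lemma chainsCstar_of_pairs (C : X -> Prop) :
  (forall a b, C a -> C b -> exists D, chainsCstar le H K D /\ D a /\ D b) ->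
  chainsCstar le H K C.
Proof.
  intros hpair. split; [|split; [|split]].
  - intros a b ha hb. destruct (hpair a b ha hb) as [D [[hD _] [hDa hDb]]]. auto.
  - intros a ha. destruct (hpair a a ha ha) as [D [[_ [hD _]] [hDa _]]]. auto.
  - intros a b ha hb. destruct (hpair a b ha hb) as [D [[_ [_ [hD _]]] [hDa hDb]]]. auto.
  - intros a ha. destruct (hpair a a ha ha) as [D [[_ [_ [_ hD]]] [hDa _]]]. auto.
Qed.

Lemma chainsCstar_bigcup (x1 : X) (F : (X -> Prop) -> Prop) :
  chainsCstar le H K (fun y => y = x1) ->
  (forall A, F A -> chainsCstar le H K (fun y => y = x1 \/ A y)) ->
  (forall A B, F A -> F B -> (forall y, A y -> B y) \/ (forall y, B y -> A y)) ->
  chainsCstar le H K (fun y => y = x1 \/ exists2 A, F A & A y).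
Proof.
  intros hx1 hF htot. apply chainsCstar_of_pairs.
  intros a b [ea|[A FA Aa]] [eb|[B FB Bb]].
  - exists (fun y => y = x1). auto.
  - exists (fun y => y = x1 \/ B y). auto.
  - exists (fun y => y = x1 \/ A y). auto.
  - destruct (htot A B FA FB) as [hAB|hBA];
      [exists (fun y => y = x1 \/ B y)|exists (fun y => y = x1 \/ A y)]; auto.
Qed.

(* No point of [C] lies strictly above [u]: it would be [<= w <= u]. *)
Lemma chainsCstar_add_coin (C : X -> Prop) w u :
  chainsCstar le H K C -> upper_bound le C w -> Coin H K u -> le w u ->
  chainsCstar le H K (fun y => C y \/ y = u).
Proof.
  intros [hch [hKH [hslt him]]] hw hu hwu. unfold Coin in hu.
  assert (hcu : forall c, C c -> le c u) by eauto using sreg_le_trans.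
  split; [|split; [|split]].
  - intros a b [ha| ->] [hb| ->]; auto; left; auto using sreg_le_refl.
  - intros a [ha| ->]; auto. rewrite hu. apply sreg_le_refl.
  - intros a b [ha| ->] [hb| ->] [hab hne].
    + apply hslt; [exact ha|exact hb|split; assumption].
    + rewrite <- hu. apply H_iso, hab.
    + exfalso. apply hne, sreg_le_antisym; auto.
    + contradiction.
  - intros a [ha| ->]; eauto.
Qed.

Hypothesis K_covers_H : covers_above le H K.
Hypothesis chain_bound : forall C, chainsCstar le H K C ->
  exists w, upper_bound le C w /\ le (H w) w /\
    exists z, (forall i, (1 <= i)%nat -> le (K w) (Nat.iter i K z) /\ le (H w) (K w)) /\
      Un_cv (fun i => d (Nat.iter i H w) (Nat.iter i K z)) 0.

Theorem maximal_coincidence_above x :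
  le (K x) (H x) ->
  exists w, le x w /\ maximal_in le (fun y => Coin H K y /\ Ostar_X le x y) w.
Proof.
  intros hx. destruct (K_covers_H x hx) as [x1 [hxx1 hKx1]].
  assert (hx1 : chainsCstar le H K (fun y => y = x1)).
  { apply chainsCstar_single; [rewrite hKx1; apply H_iso, hxx1|exists x; auto]. }
  set (P := fun A : X -> Prop => chainsCstar le H K (fun y => y = x1 \/ A y)).
  destruct (@classical_sets.Zorn_bigcup X P) as [A [PA Amax]].
  { intros F FP Ftot. apply chainsCstar_bigcup; auto. }
  destruct (chain_bound _ PA) as [w [hub [hw [z [hz hcv]]]]].
  assert (hxw : le x w) by (eapply sreg_le_trans; [exact hxx1|apply hub; auto]).
  exists w. split; [exact hxw|]. split.
  { split; [exact (coin_of_approaching_orbits w z hw hz hcv)|exact hxw]. }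
  intros [u [[hu _] [hwu hne]]].
  apply (Amax (fun y => A y \/ y = u)).
  - split; [intros y hy; auto|].
    intros hsub. pose proof (hsub u (or_intror eq_refl)) as huA.
    apply hne, sreg_le_antisym; auto.
  - eapply chainsCstar_sub; [apply (chainsCstar_add_coin _ w u PA hub hu hwu)|].
    intros y [->|[hy| ->]]; auto.
Qed.

End Coincidence.
End Regular.

Lemma preord_sreg_bmetric_flip X d s (le : X -> X -> Prop) :
  preord_sreg_bmetric s d le -> preord_sreg_bmetric s d (fun a b => le b a).
Proof.
  intros [hb [[hrefl htrans] hreg]].
  split; [exact hb|split; [split; [exact hrefl|eauto]|]].
  intros x y z hxy hyz. destruct hb as [_ [_ [_ [hsym _]]]].
  rewrite (hsym x z), (hsym x y), (hsym y z), Rmax_comm. auto.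
Qed.

Section Flip.
Variables (X : Type) (d : X -> X -> R) (s : R) (le : X -> X -> Prop).
Hypothesis Hsp : preord_sreg_bmetric s d le.
Variables H K : X -> X.
Hypothesis H_iso : isotone le H.
Hypothesis K_covers_H : covers le H K.
Hypothesis chain_bound : forall C, chainsC le H K C ->
  exists w, lower_bound le C w /\ le w (H w) /\
    exists z, (forall i, (1 <= i)%nat -> le (Nat.iter i K z) (K w) /\ le (K w) (H w)) /\
      Un_cv (fun i => d (Nat.iter i H w) (Nat.iter i K z)) 0.

Lemma chainsC_of_chainsCstar_flip C :
  chainsCstar (fun a b => le b a) H K C -> chainsC le H K C.
Proof.
  intros [hch [hKH [hslt him]]]. split; [|split; [|split]]; auto.
  - intros a b ha hb. destruct (hch a b ha hb); auto.
  - intros a b ha hb [hab hne]. apply hslt; [exact hb|exact ha|split; auto].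
Qed.

Theorem minimal_coincidence_below x :
  le (H x) (K x) ->
  exists w, le w x /\ minimal_in le (fun y => Coin H K y /\ O_X le x y) w.
Proof.
  intros hx.
  assert (H_iso_flip : isotone (fun a b => le b a) H) by (intros a b hab; apply H_iso, hab).
  destruct (maximal_coincidence_above X d s (fun a b => le b a)
              (preord_sreg_bmetric_flip X d s le Hsp) H K H_iso_flip K_covers_H)
    with (x := x) as [w [hxw [hw hmax]]]; [|exact hx|].
  - intros C hC. apply chain_bound, chainsC_of_chainsCstar_flip, hC.
  - exists w. split; [exact hxw|split; [exact hw|]].
    intros [u [hu [huw hne]]]. apply hmax. exists u. split; [exact hu|split; auto].
Qed.

End Flip.

Definition fence_step {X : Type} (le : X -> X -> Prop) (H K : nat -> X -> X)
  (t : nat) (y y' : X) : Prop :=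
  (Nat.odd t = true ->
     le y y' /\ maximal_in le (fun v => Coin (H t) (K t) v /\ Ostar_X le y v) y') /\
  (Nat.odd t = false ->
     le y' y /\ minimal_in le (fun v => Coin (H t) (K t) v /\ O_X le y v) y').

Lemma fence_exists (X : Type) (P : nat -> X -> Prop) (Rel : nat -> X -> X -> Prop)
  (n : nat) (x0 : X) :
  P 0%nat x0 ->
  (forall t y, (1 <= t <= n)%nat -> P (t - 1)%nat y -> exists y', Rel t y y' /\ P t y') ->
  exists x : nat -> X, x 0%nat = x0 /\
    forall t, (1 <= t <= n)%nat -> Rel t (x (t - 1)%nat) (x t).
Proof.
  intros hx0 hstep.
  assert (hpath : exists x : nat -> X, x 0%nat = x0 /\ P n (x n) /\
            forall t, (1 <= t <= n)%nat -> Rel t (x (t - 1)%nat) (x t)).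
  { induction n as [|m IH].
    - exists (fun _ => x0). split; [|split]; auto. intros; lia.
    - destruct IH as [x [ex0 [hxm hx]]]; [intros; apply hstep; auto; lia|].
      destruct (hstep (S m) (x m)) as [y [hRy hPy]];
        [lia|rewrite Nat.sub_succ, Nat.sub_0_r; exact hxm|].
      exists (fun k => if Nat.eqb k (S m) then y else x k).
      rewrite Nat.eqb_refl. split; [exact ex0|split; [exact hPy|]].
      intros t ht. destruct (Nat.eq_dec t (S m)) as [->|hne].
      + rewrite Nat.eqb_refl, Nat.sub_succ, Nat.sub_0_r.
        replace (Nat.eqb m (S m)) with false by (symmetry; apply Nat.eqb_neq; lia).
        exact hRy.
      + replace (Nat.eqb t (S m)) with false by (symmetry; apply Nat.eqb_neq; exact hne).
        replace (Nat.eqb (t - 1) (S m)) with false by (symmetry; apply Nat.eqb_neq; lia).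
        apply hx. lia. }
  destruct hpath as [x [ex0 [_ hx]]]. eauto.
Qed.

Theorem theorem2p4
  (X : Type) (d : X -> X -> R) (s : R) (le : X -> X -> Prop)
  (Hsp : preord_sreg_bmetric s d le)
  (T S Tt St : X -> X) (n : nat) (H K : nat -> X -> X)
  (HH0 : H 0%nat = T) (HHn : H n = Tt) (HK0 : K 0%nat = S) (HKn : K n = St)
  (* the fences  T = H_0 <= H_1 >= H_2 <= ... H_n,  S = K_0 >= K_1 <= K_2 >= ... K_n *)
  (Hfence_H : forall t : nat, (1 <= t <= n)%nat ->
     (Nat.odd t = true -> map_le le (H (t - 1)%nat) (H t)) /\
     (Nat.odd t = false -> map_le le (H t) (H (t - 1)%nat)))
  (Hfence_K : forall t : nat, (1 <= t <= n)%nat ->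
     (Nat.odd t = true -> map_le le (K t) (K (t - 1)%nat)) /\
     (Nat.odd t = false -> map_le le (K (t - 1)%nat) (K t)))
  (Hiso : forall t : nat, (1 <= t <= n)%nat -> isotone le (H t))
  (x0 : X) (Hx0 : Coin T S x0)
  (Hodd : forall t : nat, (1 <= t <= n)%nat -> Nat.odd t = true ->
     covers_above le (H t) (K t) /\
     forall C : X -> Prop, chainsCstar le (H t) (K t) C ->
       exists w : X, upper_bound le C w /\ le (H t w) w /\
         exists z : X,
           (forall i : nat, (1 <= i)%nat ->
              le (K t w) (Nat.iter i (K t) z) /\ le (H t w) (K t w)) /\
           Un_cv (fun i => d (Nat.iter i (H t) w) (Nat.iter i (K t) z)) 0)
  (Heven : forall t : nat, (1 <= t <= n)%nat -> Nat.odd t = false ->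
     covers le (H t) (K t) /\
     forall C : X -> Prop, chainsC le (H t) (K t) C ->
       exists w' : X, lower_bound le C w' /\ le w' (H t w') /\
         exists z' : X,
           (forall i : nat, (1 <= i)%nat ->
              le (Nat.iter i (K t) z') (K t w') /\ le (K t w') (H t w')) /\
           Un_cv (fun i => d (Nat.iter i (H t) w') (Nat.iter i (K t) z')) 0) :
  exists x : nat -> X,
    x 0%nat = x0 /\
    forall t : nat, (1 <= t <= n)%nat ->
      (Nat.odd t = true ->
         le (x (t - 1)%nat) (x t) /\
         maximal_in le (fun y => Coin (H t) (K t) y /\ Ostar_X le (x (t - 1)%nat) y) (x t)) /\
      (Nat.odd t = false ->
         le (x t) (x (t - 1)%nat) /\
         minimal_in le (fun y => Coin (H t) (K t) y /\ O_X le (x (t - 1)%nat) y) (x t)).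
Proof.
  apply fence_exists with (P := fun t => Coin (H t) (K t)) (Rel := fence_step le H K).
  { rewrite HH0, HK0. exact Hx0. }
  intros t y ht hy. unfold Coin in hy.
  destruct (Hfence_H t ht) as [hH_up hH_down], (Hfence_K t ht) as [hK_down hK_up].
  destruct (Nat.odd t) eqn:hodd.
  - destruct (Hodd t ht hodd) as [hcov hchain].
    destruct (maximal_coincidence_above X d s le Hsp (H t) (K t) (Hiso t ht) hcov hchain y)
      as [w [hyw hw]].
    + eapply sreg_le_trans; [exact Hsp|apply hK_down; reflexivity|].
      rewrite <- hy. apply hH_up. reflexivity.
    + exists w. unfold fence_step. rewrite hodd.
      split; [split; [intros _; split; assumption|discriminate]|apply hw].
  - destruct (Heven t ht hodd) as [hcov hchain].
    destruct (minimal_coincidence_below X d s le Hsp (H t) (K t) (Hiso t ht) hcov hchain y)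
      as [w [hwy hw]].
    + eapply sreg_le_trans; [exact Hsp|apply hH_down; reflexivity|].
      rewrite hy. apply hK_up. reflexivity.
    + exists w. unfold fence_step. rewrite hodd.
      split; [split; [discriminate|intros _; split; assumption]|apply hw].
Qed.
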